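(* Let $S,B\subseteq\{-1,1,*\}^X$ be binary hypothesis classes. For any $\varepsilon,\delta\ge0$ and $n\in\mathbb{Z}_{\ge0}$, every learner that solves agnostic learning $\mathsf{AgnL}_n(\mathbf{A}_{S,B},\varepsilon,\delta)$ also solves comparative learning $\mathsf{CompL}_n(S,B,\varepsilon,\delta)$; i.e. $\mathsf{AgnL}_n(\mathbf{A}_{S,B},\varepsilon,\delta)\subseteq\mathsf{CompL}_n(S,B,\varepsilon,\delta)$.
   Context: $X$ is a non-empty set; hypotheses are functions $X\to\{-1,1,*\}$; distributions are discrete. For $s,b:X\to\{-1,1,*\}$, the agreement hypothesis $\mathbf{a}_{s,b}:X\to\{-1,1,*\}$ is $\mathbf{a}_{s,b}(x)=-1$ if $s(x)=b(x)=-1$, $\mathbf{a}_{s,b}(x)=1$ if $s(x)=b(x)=1$, and $\mathbf{a}_{s,b}(x)=*$ otherwise; $\mathbf{A}_{S,B}=\{\mathbf{a}_{s,b}:s\in S,b\in B\}$. A learner takes $n$ data points in $X\times\{-1,1\}$ and outputs $f:X\to\{-1,1\}$ (possibly randomized). It belongs to $\mathsf{AgnL}_n(H,\varepsilon,\delta)$ if for every distribution $\mu$ on $X\times\{-1,1\}$, given $n$ i.i.d. samples from $\mu$, with probability $\ge1-\delta$ it outputs $f$ with $\Pr_\mu[f(x)\ne y]\le\inf_{h\in H}\Pr_\mu[h(x)\ne y]+\varepsilon$ (where $h(x)=*$ counts as an error). It belongs to $\mathsf{CompL}_n(S,B,\varepsilon,\delta)$ if the same guarantee holds with $H$ replaced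 by $B$, but only for distributions $\mu$ with $\Pr_\mu[s(x)=y]=1$ for some $s\in S$. *)

From Stdlib Require Import Reals List ClassicalDescription.
From Coquelicot Require Import Coquelicot.
Open Scope R_scope.

Inductive sign := Neg | Pos.
Inductive pval := PNeg | PPos | Star.

Definition emb (y : sign) : pval := match y with Neg => PNeg | Pos => PPos end.

Definition agree {X : Type} (s b : X -> pval) : X -> pval :=
  fun x => match s x, b x with
           | PNeg, PNeg => PNeg
           | PPos, PPos => PPos
           | _, _ => Star
           end.

Definition Aclass {X : Type} (S B : (X -> pval) -> Prop) : (X -> pval) -> Prop :=
  fun h => exists s b, S s /\ B b /\ h = agree s b.

(* A discrete distribution on T: countably many atoms with nonnegative
   weights summing to 1 (repetitions of atoms allowed, zero weights allowed,
   so finite supports are included). *)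
Record ddist (T : Type) := {
  atom : nat -> T;
  wt : nat -> R;
  wt_nonneg : forall i, 0 <= wt i;
  wt_sum : is_series wt 1 }.
Arguments atom {T}.
Arguments wt {T}.

Definition ind (P : Prop) : R :=
  if excluded_middle_informative P then 1 else 0.

Definition prob {T : Type} (mu : ddist T) (P : T -> Prop) : R :=
  Series (fun i => wt mu i * ind (P (atom mu i))).

(* Error of a partial hypothesis (h(x) = * counts as an error). *)
Definition err {X : Type} (mu : ddist (X * sign)) (h : X -> pval) : R :=
  prob mu (fun z => h (fst z) <> emb (snd z)).

Definition errf {X : Type} (mu : ddist (X * sign)) (f : X -> sign) : R :=
  prob mu (fun z => f (fst z) <> snd z).

(* Expectation of E over n i.i.d. samples from mu. *)
Fixpoint sample_exp {T : Type} (mu : ddist T) (n : nat) (E : list T -> R) : R :=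
  match n with
  | O => E nil
  | S n' => Series (fun i => wt mu i * sample_exp mu n' (fun s => E (atom mu i :: s)))
  end.

(* A (possibly randomized) learner: maps a sample to a (discrete)
   distribution over output classifiers X -> {-1,1}. *)
Definition learner (X : Type) := list (X * sign) -> ddist (X -> sign).

Definition success {X : Type} (L : learner X) (mu : ddist (X * sign)) (n : nat)
  (G : (X -> sign) -> Prop) : R :=
  sample_exp mu n (fun s => prob (L s) G).

(* err(f) <= inf_{h in H} err(h) + eps, written out via the inf being the
   greatest lower bound (also correct for empty H, inf = +oo). *)
Definition good {X : Type} (H : (X -> pval) -> Prop) (eps : R)
  (mu : ddist (X * sign)) (f : X -> sign) : Prop :=
  forall h, H h -> errf mu f <= err mu h + eps.

Definition AgnL {X : Type} (n : nat) (H : (X -> pval) -> Prop) (eps delta : R)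
  (L : learner X) : Prop :=
  forall mu : ddist (X * sign), success L mu n (good H eps mu) >= 1 - delta.

Definition CompL {X : Type} (n : nat) (S B : (X -> pval) -> Prop) (eps delta : R)
  (L : learner X) : Prop :=
  forall mu : ddist (X * sign),
    (exists s, S s /\ prob mu (fun z => s (fst z) = emb (snd z)) = 1) ->
    success L mu n (good B eps mu) >= 1 - delta.

(* If some s in S labels mu perfectly, then the agreement hypotheses a_{s',b} never beat b
   (a_{s',b} errs wherever b does) and a_{s,b} does no worse than b (it errs only where s or b
   does, and s errs with probability 0). Hence inf over A_{S,B} equals inf over B, the two
   success events coincide, and the agnostic guarantee is the comparative one. *)
From Stdlib Require Import Reals Lra Classical ClassicalDescription FunctionalExtensionality
  PropExtensionality.
From Coquelicot Require Import Coquelicot.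
Open Scope R_scope.

Lemma ind_bounds (P : Prop) : 0 <= ind P <= 1.
Proof. unfold ind; destruct excluded_middle_informative; lra. Qed.

Lemma ex_series_prob {T : Type} (mu : ddist T) (P : T -> Prop) :
  ex_series (fun i => wt mu i * ind (P (atom mu i))).
Proof.
  apply (@ex_series_le R_AbsRing R_CompleteNormedModule _ (wt mu)).
  - intro i. change norm with Rabs. simpl.
    pose proof (wt_nonneg _ mu i). pose proof (ind_bounds (P (atom mu i))).
    rewrite Rabs_pos_eq; nra.
  - exists 1. apply wt_sum.
Qed.

Lemma prob_le {T : Type} (mu : ddist T) (P Q : T -> Prop) :
  (forall z, P z -> Q z) -> prob mu P <= prob mu Q.
Proof.
  intro HPQ. unfold prob. apply Series_le; [| apply ex_series_prob].
  intro i. pose proof (wt_nonneg _ mu i). pose proof (ind_bounds (P (atom mu i))).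
  split; [nra |].
  apply Rmult_le_compat_l; [assumption |]. unfold ind.
  do 2 destruct excluded_middle_informative; try lra.
  exfalso; auto.
Qed.

Lemma prob_or_le {T : Type} (mu : ddist T) (P Q : T -> Prop) :
  prob mu (fun z => P z \/ Q z) <= prob mu P + prob mu Q.
Proof.
  unfold prob. rewrite <- Series_plus by apply ex_series_prob.
  apply Series_le.
  - intro i. pose proof (wt_nonneg _ mu i).
    pose proof (ind_bounds (P (atom mu i) \/ Q (atom mu i))).
    split; [nra |].
    rewrite <- Rmult_plus_distr_l. apply Rmult_le_compat_l; [assumption |].
    unfold ind. repeat destruct excluded_middle_informative; try lra; tauto.
  - apply (@ex_series_plus R_AbsRing R_NormedModule); apply ex_series_prob.
Qed.

Lemma prob_add_not {T : Type} (mu : ddist T) (P : T -> Prop) :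
  prob mu P + prob mu (fun z => ~ P z) = 1.
Proof.
  unfold prob.
  rewrite <- Series_plus; [| apply ex_series_prob | apply (ex_series_prob mu (fun z => ~ P z))].
  rewrite (Series_ext _ (wt mu)).
  - apply is_series_unique, wt_sum.
  - intro i. rewrite <- Rmult_plus_distr_l. unfold ind.
    repeat destruct excluded_middle_informative; try tauto; lra.
Qed.

Section Agreement.

Context {X : Type}.
Implicit Types (mu : ddist (X * sign)) (s b : X -> pval).

Lemma agree_emb_r s b x y : agree s b x = emb y -> b x = emb y.
Proof. unfold agree; destruct y, (s x), (b x); simpl; congruence. Qed.

Lemma agree_emb s b x y : s x = emb y -> b x = emb y -> agree s b x = emb y.
Proof. unfold agree; intros -> ->; destruct y; reflexivity. Qed.

Lemma err_le_err_agree mu s b : err mu b <= err mu (agree s b).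
Proof.
  apply prob_le. intros z Hb Hsb. apply Hb, (agree_emb_r s), Hsb.
Qed.

Lemma err_agree_le mu s b : err mu (agree s b) <= err mu s + err mu b.
Proof.
  eapply Rle_trans; [| apply prob_or_le].
  apply prob_le. intros z Hsb.
  destruct (classic (s (fst z) = emb (snd z))) as [Hs | Hs]; [| now left].
  right. intro Hb. apply Hsb, agree_emb; assumption.
Qed.

Lemma err_realizable mu s :
  prob mu (fun z => s (fst z) = emb (snd z)) = 1 -> err mu s = 0.
Proof.
  intro Hs. pose proof (prob_add_not mu (fun z => s (fst z) = emb (snd z))).
  unfold err. lra.
Qed.

Lemma good_Aclass_realizable (S B : (X -> pval) -> Prop) eps mu s :
  S s -> err mu s = 0 -> good (Aclass S B) eps mu = good B eps mu.
Proof.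
  intros Ss Hs. extensionality f. apply propositional_extensionality. split.
  - intros G b Bb.
    assert (Hsb : Aclass S B (agree s b)) by (exists s, b; auto).
    pose proof (G _ Hsb). pose proof (err_agree_le mu s b). lra.
  - intros G h (s' & b & _ & Bb & ->).
    pose proof (G b Bb). pose proof (err_le_err_agree mu s' b). lra.
Qed.

End Agreement.

Theorem lemma3p6 (X : Type) (HX : inhabited X) (S B : (X -> pval) -> Prop)
  (eps delta : R) (n : nat) (Heps : 0 <= eps) (Hdelta : 0 <= delta)
  (L : learner X) :
  AgnL n (Aclass S B) eps delta L -> CompL n S B eps delta L.
Proof.
  intros HA mu (s & Ss & Hs).
  rewrite <- (good_Aclass_realizable S B eps mu s Ss (err_realizable mu s Hs)).
  apply HA.
Qed.
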